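(* The function $h:2^V\to\mathbb{R}$, $h(A)=\sum_{v\in V}h_A(v)$, is non-decreasing and submodular: for all $A\subseteq B\subseteq V$, $h(A)\le h(B)$, and for all $x\in V$, $h(B\cup\{x\})-h(B)\le h(A\cup\{x\})-h(A)$.
   Context: $G=(V,E,w)$ is a finite simple undirected graph with positive edge weights $w$. $N_A(v)=N(v)\cap A$, $W_A(v)=\sum_{u\in N_A(v)}w_{(v,u)}$, $W(v)=W_V(v)$. Define $h_A(v)=W(v)/2$ if $v\in A$ or $W_A(v)\ge W(v)/2$, and $h_A(v)=W_A(v)$ otherwise. *)

(* A finite simple undirected weighted graph is a vertex
   finType V, a symmetric irreflexive edge relation e, and a weight function
   w : V -> V -> R (only its values on edges matter), symmetric and positive
   on edges. *)
From HB Require Import structures.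
From mathcomp Require Import all_boot all_order all_algebra.
Set Implicit Arguments. Unset Strict Implicit. Unset Printing Implicit Defensive.
Import Order.TTheory GRing.Theory Num.Theory.
Local Open Scope ring_scope.

Section Defs.
Variables (R : realFieldType) (V : finType) (e : rel V) (w : V -> V -> R).

Definition weighted_simple_graph : Prop :=
  [/\ irreflexive e, symmetric e,
      (forall u v, w u v = w v u) & (forall u v, e u v -> 0 < w u v)].

Definition WA (A : {set V}) (v : V) : R := \sum_(u in A | e v u) w v u.

Definition Wt (v : V) : R := WA [set: V] v.

Definition hA (A : {set V}) (v : V) : R :=
  if (v \in A) || (Wt v / 2 <= WA A v) then Wt v / 2 else WA A v.

Definition h (A : {set V}) : R := \sum_(v : V) hA A v.
End Defs.

(* Each summand h_A(v) is [Wt v / 2] when [v \in A], and otherwise the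
   truncation [min (Wt v / 2) (WA A v)]. Enlarging A enlarges both the
   membership flag and the linear quantity [WA A v], and adding a vertex x
   to A increases [WA A v] by the fixed amount [w v x] (or 0). Truncation
   at a constant is non-decreasing and has diminishing increments, which
   gives monotonicity and submodularity of every summand, hence of h. *)
From HB Require Import structures.
From mathcomp Require Import all_boot all_order all_algebra.
From mathcomp Require Import lra.
Set Implicit Arguments. Unset Strict Implicit. Unset Printing Implicit Defensive.
Import Order.TTheory GRing.Theory Num.Theory.
Local Open Scope ring_scope.

Section Truncation.
Variable R : realFieldType.

Definition capped (c : R) (m : bool) (t : R) : R :=
  if m || (c <= t) then c else t.

Lemma capped_le c (m1 m2 : bool) a b :
  (m1 -> m2) -> a <= b -> capped c m1 a <= capped c m2 b.
Proof.
rewrite /capped; case: (lerP c a); case: (lerP c b); case: m1; case: m2 => //=;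
  move=> ? ? m12 ?; try (by have := m12 isT); lra.
Qed.

Lemma capped_incr_le c (m1 m2 : bool) a b d :
  (m1 -> m2) -> a <= b -> 0 <= d ->
  capped c m2 (b + d) - capped c m2 b <= capped c m1 (a + d) - capped c m1 a.
Proof.
rewrite /capped; case: (lerP c a); case: (lerP c b); case: (lerP c (a + d));
  case: (lerP c (b + d)); case: m1; case: m2 => //=;
  move=> ? ? ? ? m12 ? ?; try (by have := m12 isT); lra.
Qed.

End Truncation.

Section Summands.
Variables (R : realFieldType) (V : finType) (e : rel V) (w : V -> V -> R).
Hypothesis w_ge0 : forall u v, e u v -> 0 <= w u v.

Lemma hAE (A : {set V}) v :
  hA e w A v = capped (Wt e w v / 2) (v \in A) (WA e w A v).
Proof. by []. Qed.

Lemma WA_mkcond (S : {set V}) v :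
  WA e w S v = \sum_u (if (u \in S) && e v u then w v u else 0).
Proof. by rewrite /WA big_mkcond. Qed.

Lemma edge_weight_ge0 v x : 0 <= (if e v x then w v x else 0).
Proof. by case: ifP => // /w_ge0. Qed.

Lemma WA_subset (A B : {set V}) v : A \subset B -> WA e w A v <= WA e w B v.
Proof.
move=> sAB; rewrite !WA_mkcond; apply: ler_sum => u _.
case uA: (u \in A); first by rewrite (subsetP sAB _ uA).
by case: (u \in B); rewrite ?lexx //= edge_weight_ge0.
Qed.

Lemma WA_setU1 (S : {set V}) x v : x \notin S ->
  WA e w (x |: S) v = WA e w S v + (if e v x then w v x else 0).
Proof.
move=> xS; rewrite !WA_mkcond (bigD1 x) //= [in RHS](bigD1 x) //=.
rewrite setU11 (negbTE xS) add0r addrC; congr (_ + _).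
by apply: eq_bigr => u ux; rewrite in_setU1 (negbTE ux).
Qed.

Lemma hA_subset (A B : {set V}) v : A \subset B -> hA e w A v <= hA e w B v.
Proof.
move=> sAB; rewrite !hAE; apply: capped_le; first exact: subsetP.
exact: WA_subset.
Qed.

Lemma hA_submod (A B : {set V}) x v : A \subset B -> x \notin B ->
  hA e w (x |: B) v - hA e w B v <= hA e w (x |: A) v - hA e w A v.
Proof.
move=> sAB xB; have xA : x \notin A by apply: contra xB; apply: subsetP.
have [->|vx] := eqVneq v x.
  rewrite !hAE !setU11 (negbTE xA) (negbTE xB) lerD2l lerN2.
  exact/capped_le/WA_subset.
rewrite !hAE (WA_setU1 _ xA) (WA_setU1 _ xB) !in_setU1 (negbTE vx) /=.
apply: capped_incr_le; [exact: subsetP | exact: WA_subset | exact: edge_weight_ge0].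
Qed.

Lemma h_subset (A B : {set V}) : A \subset B -> h e w A <= h e w B.
Proof. by move=> sAB; apply: ler_sum => v _; apply: hA_subset. Qed.

Lemma h_submod (A B : {set V}) x : A \subset B ->
  h e w (x |: B) - h e w B <= h e w (x |: A) - h e w A.
Proof.
move=> sAB; have [xB|xB] := boolP (x \in B).
  have -> : x |: B = B by apply/setUidPr; rewrite sub1set.
  by rewrite subrr subr_ge0 h_subset ?subsetUr.
by rewrite /h -!sumrB; apply: ler_sum => v _; apply: hA_submod.
Qed.

End Summands.

Theorem mainTheorem12 (R : realFieldType) (V : finType) (e : rel V)
    (w : V -> V -> R) :
  weighted_simple_graph e w ->
  (forall A B : {set V}, A \subset B -> h e w A <= h e w B) /\
  (forall (A B : {set V}) (x : V), A \subset B ->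
     h e w (x |: B) - h e w B <= h e w (x |: A) - h e w A).
Proof.
case=> _ _ _ w_gt0.
have w_ge0 u v : e u v -> 0 <= w u v by move/w_gt0/ltW.
by split=> [A B | A B x]; [apply: h_subset | apply: h_submod].
Qed.
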